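(* Suppose $\Lambda_i\in\mathcal H_I$ with $0<\lambda_i^-\le\lambda_i^+<1$ for $i\in[n]$, and $w_1,\dots,w_n$ are continuous and subadditive capacities. Let $$\kappa=\inf_{(A_1,\dots,A_n)\in\Pi_n(\Omega)}\ \min_{i\in[n]}\Big(\frac{w_i(A_i)}{\lambda_i^-}\vee\max_{j\ne i}\frac{w_j(A_j)}{\lambda_j^+}\Big).$$ (i) If $\kappa<1$, then $\Gamma_{\mathbf\Lambda,\mathbf w}(X)=-\infty$ for every $X\in\mathcal X$. (ii) If $\kappa>1$, then $\Gamma_{\mathbf\Lambda,\mathbf w}(X)>-\infty$ for every $X\in\mathcal X$.
   Context: $\mathcal X$: real-valued random variables on $(\Omega,\mathcal F)$. Capacity: monotone $w:\mathcal F\to[0,1]$, $w(\emptyset)=0$, $w(\Omega)=1$; continuous if $w(A_k)\to0$ whenever $A_k\downarrow\emptyset$; subadditive if $w(A\cup B)\le w(A)+w(B)$. $\mathcal H_I$: increasing functions $\mathbb R\to(0,1)$; $\lambda_i^-=\inf_x\Lambda_i(x)$, $\lambda_i^+=\sup_x\Lambda_i(x)$. $\Pi_n(\Omega)$: measurable partitions of $\Omega$ into $n$ sets. $\mathcal A^{\mathbf\Lambda,\mathbf w}_x=\{\bigcup_iA_i: A_i\in\mathcal F, w_i(A_i)\le\Lambda_i(y_i)\ \forall i\text{ for some }(y_i)\in\mathbb R^n,\sum_iy_i=x\}$ and $\Gamma_{\mathbf\Lambda,\mathbf w}(X)=\inf\{x\in\mathbb R:\{X>x\}\in\mathcal A^{\mathbf\Lambda,\mathbf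 w}_x\}$ (the inf-convolution of the $\Lambda_i\mathrm{VaR}^{w_i}$). *)

From HB Require Import structures.
From mathcomp Require Import all_boot all_order all_algebra.
From mathcomp Require Import all_classical all_reals all_analysis.
Set Implicit Arguments. Unset Strict Implicit. Unset Printing Implicit Defensive.
Import Order.TTheory GRing.Theory Num.Theory.
Import numFieldNormedType.Exports.
Local Open Scope classical_set_scope.
Local Open Scope ring_scope.

Section Defs.
Context {d : measure_display} {Omega : measurableType d} {R : realType}.

(* capacity on the sigma-algebra F (values only matter on measurable sets) *)
Definition capacity (w : set Omega -> R) : Prop :=
  w set0 = 0 /\ w setT = 1 /\
  (forall A, measurable A -> 0 <= w A <= 1) /\
  (forall A B, measurable A -> measurable B -> A `<=` B -> w A <= w B).

Definition cap_continuous (w : set Omega -> R) : Prop :=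
  forall F : nat -> set Omega, (forall k, measurable (F k)) ->
    (forall k, F k.+1 `<=` F k) -> \bigcap_k F k = set0 ->
    (fun k => w (F k)) @ \oo --> (0 : R).

Definition cap_subadditive (w : set Omega -> R) : Prop :=
  forall A B, measurable A -> measurable B -> w (A `|` B) <= w A + w B.

Definition in_HI (L : R -> R) : Prop :=
  {homo L : x y / x <= y} /\ (forall x, 0 < L x < 1).

Definition lam_minus (L : R -> R) : R := inf (range L).
Definition lam_plus (L : R -> R) : R := sup (range L).

Definition is_partition (n : nat) (A : 'I_n -> set Omega) : Prop :=
  (forall i, measurable (A i)) /\
  (forall i j, i != j -> A i `&` A j = set0) /\
  (forall x, exists i, A i x).

Definition Aclass (n : nat) (L : 'I_n -> R -> R) (w : 'I_n -> set Omega -> R)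
  (x : R) (B : set Omega) : Prop :=
  exists A : 'I_n -> set Omega, exists y : 'I_n -> R,
    (forall i, measurable (A i)) /\
    (\sum_(i < n) y i = x) /\
    (forall i, w i (A i) <= L i (y i)) /\
    B = \bigcup_(i in setT) A i.

Definition Gamma (n : nat) (L : 'I_n -> R -> R) (w : 'I_n -> set Omega -> R)
  (X : Omega -> R) : \bar R :=
  ereal_inf [set x%:E | x in [set x : R | Aclass L w x [set om | x < X om]]].

Definition kappa (n : nat) (L : 'I_n -> R -> R) (w : 'I_n -> set Omega -> R)
  : \bar R :=
  ereal_inf [set (\big[Order.min/+oo%E]_(i < n)
                   Order.max ((w i (A i) / lam_minus (L i))%:E)
                     (\big[Order.max/-oo%E]_(j < n | j != i)
                        ((w j (A j) / lam_plus (L j))%:E)))%E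
            | A in [set A : 'I_n -> set Omega | is_partition A]].

End Defs.

(** Proof idea.
(i) A partition witnessing [kappa < 1] has [w_i(A_i) < lam_minus_i <= L_i(y)] for
every [y], and [w_j(A_j) < lam_plus_j], hence [w_j(A_j) <= L_j(y_j)] for some
[y_j], for [j <> i].  Choosing [y_i := x - sum_(j <> i) y_j] puts
[{X > x} = U_j (A_j n {X > x})] into the class at level [x], for every [x].
(ii) If [Gamma(X) = -oo], pick [x <= -nK] in the class, with witnesses [A], [y].
Some [y_i <= x/n <= -K]; adding the lower level set [{X <= -K}] to [A_i] and
disjointifying yields a partition with [w_i(P_i) <= L_i(-K) + w_i({X <= -K})],
which is close to [lam_minus_i] for large [K] by continuity of [w_i] and the
definition of [lam_minus_i], and [w_j(P_j) <= L_j(y_j) <= lam_plus_j].  Hence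
[kappa <= 1]. *)

From HB Require Import structures.
From mathcomp Require Import all_boot all_order all_algebra.
From mathcomp Require Import all_classical all_reals all_analysis.
From mathcomp Require Import lra.
Set Implicit Arguments. Unset Strict Implicit. Unset Printing Implicit Defensive.
Import Order.TTheory GRing.Theory Num.Theory.
Local Open Scope classical_set_scope.
Local Open Scope ring_scope.

Lemma partition_sub_cover (d : measure_display) (T : measurableType d) (n : nat)
    (B : 'I_n -> set T) :
  (forall j, measurable (B j)) -> (forall x, exists j, B j x) ->
  exists P : 'I_n -> set T, is_partition P /\ forall j, P j `<=` B j.
Proof.
move=> mB covB.
pose P j := B j `&` \bigcap_(m in [set m : 'I_n | (m < j)%N]) ~` B m.
exists P; split; last by move=> j x [].
split; [|split].
- move=> j; apply: measurableI => //.
  by apply: fin_bigcap_measurable => // m _; exact: measurableC.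
- move=> j k; rewrite -(inj_eq val_inj) neq_ltn => /orP[] jk.
  + by apply/seteqP; split => // x [[Bj _] [_ /(_ j jk)]]; apply.
  + by apply/seteqP; split => // x [[_ /(_ k jk) nBk] [Bk _]]; apply: nBk.
- move=> x; have [j0 Bj0] := covB x.
  pose inB : pred 'I_n := fun j => `[< B j x >].
  have inBj0 : inB j0 by exact: asboolT.
  case: (arg_minnP (fun j : 'I_n => nat_of_ord j) inBj0) => j /asboolP Bj jmin.
  exists j; split => // m /= mj Bm.
  by have := jmin m (asboolT Bm); rewrite leqNgt mj.
Qed.

Lemma partition_sub_cover_at (d : measure_display) (T : measurableType d) (n : nat)
    (A : 'I_n -> set T) (i : 'I_n) (E : set T) :
  (forall j, measurable (A j)) -> measurable E ->
  (forall x, E x \/ exists j, A j x) ->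
  exists P : 'I_n -> set T, is_partition P /\
    P i `<=` A i `|` E /\ (forall j, j != i -> P j `<=` A j).
Proof.
move=> mA mE cover; pose B j := if j == i then A i `|` E else A j.
have mB j : measurable (B j).
  by rewrite /B; case: eqP => _; [exact: measurableU | exact: mA].
have coverB x : exists j, B j x.
  case: (cover x) => [Ex|[j Aj]]; first by exists i; rewrite /B eqxx; right.
  by exists j; rewrite /B; case: eqVneq => [ji|_] //; left; rewrite -ji.
have [P [Ppart PB]] := partition_sub_cover mB coverB.
exists P; split=> //; split=> [|j /negbTE ji]; first by have := PB i; rewrite /B eqxx.
by have := PB j; rewrite /B ji.
Qed.

Lemma exists_le_mean (R : realFieldType) (n : nat) (y : 'I_n -> R) :
  (0 < n)%N -> exists i, y i <= (\sum_(j < n) y j) / n%:R.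
Proof.
move=> n_gt0; apply/not_existsP => gt_mean.
have lt_y i : (\sum_(j < n) y j) / n%:R < y i by rewrite ltNge; exact/negP.
have : \sum_(j < n) ((\sum_(k < n) y k) / n%:R) < \sum_(j < n) y j.
  by apply: ltr_sum => //; apply/hasP; exists (Ordinal n_gt0).
rewrite sumr_const card_ord -[_ *+ n]mulr_natr divfK ?ltxx //.
by rewrite pnatr_eq0 -lt0n.
Qed.

Section Gamma_kappa.
Context {d : measure_display} {Omega : measurableType d} {R : realType}.

Lemma lam_minus_le (L : R -> R) : in_HI L -> forall t, lam_minus L <= L t.
Proof.
move=> [_ L01] t; apply: ge_inf; last by exists t.
by exists 0 => _ [s _ <-]; have /andP[/ltW] := L01 s.
Qed.

Lemma le_lam_plus (L : R -> R) : in_HI L -> forall t, L t <= lam_plus L.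
Proof.
move=> [_ L01] t; apply: ub_le_sup; last by exists t.
by exists 1 => _ [s _ <-]; have /andP[_ /ltW] := L01 s.
Qed.

Lemma lam_plus_gt0 (L : R -> R) : in_HI L -> 0 < lam_plus L.
Proof.
by move=> HL; case/andP: (HL.2 0) => L0 _; exact: lt_le_trans L0 (le_lam_plus HL 0).
Qed.

Lemma lam_plus_gt (L : R -> R) r : r < lam_plus L -> exists t, r < L t.
Proof.
move=> /(sup_gt (ex_intro _ (L 0) (ex_intro2 _ _ 0 I erefl))) [_ [t _ <-]].
by exists t.
Qed.

Lemma lam_minus_near_Ny (L : R -> R) e : in_HI L -> 0 < e ->
  \forall k \near \oo, L (- k%:R) < lam_minus L + e.
Proof.
move=> [L_homo _] e_gt0.
have [_ [t _ <-] Lt] := @inf_lt _ (range L) (lam_minus L + e)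
  (ex_intro _ (L 0) (ex_intro2 _ _ 0 I erefl)) ltac:(by rewrite ltrDl).
exists (Num.bound `|t|) => // k /= tk; apply: le_lt_trans Lt; apply: L_homo.
have := archi_boundP (normr_ge0 t); rewrite -(ler_nat R) in tk.
have := ler_norm (- t); rewrite normrN; lra.
Qed.

Lemma measurable_lt_level (X : Omega -> R) x : measurable_fun setT X ->
  measurable [set om | x < X om].
Proof.
move=> mX; rewrite (_ : [set om | x < X om] = setT `&` X @^-1` `]x, +oo[); first exact: mX.
by apply/seteqP; split => om /=; rewrite in_itv /= ?andbT // => -[].
Qed.

Lemma measurable_le_level (X : Omega -> R) x : measurable_fun setT X ->
  measurable [set om | X om <= x].
Proof.
move=> mX; rewrite (_ : [set om | X om <= x] = setT `&` X @^-1` `]-oo, x]); first exact: mX.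
by apply/seteqP; split => om /=; rewrite in_itv /= // => -[].
Qed.

Lemma cap_lower_levels_cvg0 (w : set Omega -> R) (X : Omega -> R) :
  cap_continuous w -> measurable_fun setT X ->
  (fun k => w [set om | X om <= - k%:R]) @ \oo --> 0.
Proof.
move=> w_cont mX; apply: w_cont => [k|k om|]; first exact: measurable_le_level.
  by move=> /le_trans; apply; rewrite lerN2 ler_nat.
apply/seteqP; split => // om /(_ (Num.bound `|X om|) I) /=.
have := archi_boundP (normr_ge0 (X om)); have := ler_norm (- X om); rewrite normrN.
lra.
Qed.

Lemma Gamma_Ny (n : nat) (L : 'I_n -> R -> R) (w : 'I_n -> set Omega -> R)
    (X : Omega -> R) :
  (forall x, Aclass L w x [set om | x < X om]) -> Gamma L w X = -oo%E.
Proof.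
move=> allA; rewrite /Gamma -ereal_inf_real; congr ereal_inf.
by apply/seteqP; split=> _ [x _ <-]; exists x => //; exact: allA.
Qed.

Section kappa_bounds.
Variables (n : nat) (L : 'I_n -> R -> R) (w : 'I_n -> set Omega -> R).
Hypothesis L_HI : forall i, in_HI (L i).
Hypothesis lam_minus_gt0 : forall i, 0 < lam_minus (L i).
Hypothesis w_cap : forall i, capacity (w i).

Lemma kappa_lt1_partition : (kappa L w < 1)%E ->
  exists A i, is_partition A /\ w i (A i) < lam_minus (L i) /\
    forall j, j != i -> w j (A j) < lam_plus (L j).
Proof.
move=> /ereal_inf_lt[_ [A Apart <-]] /bigmin_ltP[//|[i _]].
rewrite gt_max => /andP[wi wj]; exists A, i; split=> //; split.
  by move: wi; rewrite lte_fin ltr_pdivrMr ?mul1r.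
move=> j ji; have : ((w j (A j) / lam_plus (L j))%:E < 1)%E.
  by apply: le_lt_trans wj; exact: le_bigmax_cond.
by rewrite lte_fin ltr_pdivrMr ?mul1r ?lam_plus_gt0.
Qed.

Lemma Aclass_of_partition (A : 'I_n -> set Omega) i (X : Omega -> R) :
  measurable_fun setT X -> is_partition A -> w i (A i) < lam_minus (L i) ->
  (forall j, j != i -> w j (A j) < lam_plus (L j)) ->
  forall x, Aclass L w x [set om | x < X om].
Proof.
move=> mX [mA [_ covA]] wi wj x.
have /choice [y0 wy0] : forall j, exists t, j != i -> w j (A j) <= L j t.
  move=> j; case: (eqVneq j i) => [_|/wj /lam_plus_gt [t /ltW]]; first by exists 0.
  by exists t.
pose y j := if j == i then x - \sum_(k < n | k != i) y0 k else y0 j.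
have mAx j : measurable (A j `&` [set om | x < X om]).
  exact: measurableI (mA j) (measurable_lt_level _ mX).
exists (fun j => A j `&` [set om | x < X om]), y; split; [by [] | split; [|split]].
- rewrite (bigD1 i) //= /y eqxx [X in _ + X](eq_bigr y0) ?subrK // => j /negbTE -> //.
- move=> j; have [_ [_ [_ w_mono]]] := w_cap j.
  apply: le_trans (w_mono _ _ (mAx j) (mA j) (@subIsetl _ _ _)) _.
  rewrite /y; case: (eqVneq j i) => [->|/wy0 //].
  exact: le_trans (ltW wi) (lam_minus_le (L_HI i) _).
- apply/seteqP; split => [om xX|om [j _ []] //].
  by have [j Aj] := covA om; exists j.
Qed.

Lemma Gamma_Ny_of_kappa_lt1 (X : Omega -> R) :
  measurable_fun setT X -> (kappa L w < 1)%E -> Gamma L w X = -oo%E.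
Proof.
move=> mX /kappa_lt1_partition [A [i [Apart [wi wj]]]].
exact/Gamma_Ny/(Aclass_of_partition mX Apart wi wj).
Qed.

Lemma kappa_le_of_partition (P : 'I_n -> set Omega) i r :
  is_partition P -> w i (P i) <= r * lam_minus (L i) ->
  (forall j, j != i -> w j (P j) <= r * lam_plus (L j)) -> (kappa L w <= r%:E)%E.
Proof.
move=> Ppart wi wj.
apply: le_trans; first by apply: ereal_inf_lbound; exists P.
apply: le_trans; first exact: (bigmin_le _ i).
rewrite ge_max; apply/andP; split.
  by rewrite lee_fin ler_pdivrMr.
apply: bigmax_le => [|j ji]; first exact: leNye.
by rewrite lee_fin ler_pdivrMr ?lam_plus_gt0 ?wj.
Qed.

Hypothesis w_cont : forall i, cap_continuous (w i).
Hypothesis w_subadd : forall i, cap_subadditive (w i).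

Lemma exists_low_level (X : Omega -> R) (eps : 'I_n -> R) :
  measurable_fun setT X -> (forall i, 0 < eps i) ->
  exists K : nat, forall i, w i [set om | X om <= - K%:R] < eps i /\
    L i (- K%:R) < lam_minus (L i) + eps i.
Proof.
move=> mX eps_gt0.
have [K _ /(_ K (leqnn K)) ?] : \forall k \near \oo, forall i,
    w i [set om | X om <= - k%:R] < eps i /\ L i (- k%:R) < lam_minus (L i) + eps i.
  apply: filter_forall => i.
  by apply: filterS2 (cvgr_lt _ (cap_lower_levels_cvg0 (w_cont i) mX) _ (eps_gt0 i))
    (lam_minus_near_Ny (L_HI i) (eps_gt0 i)) => k.
by exists K.
Qed.

Lemma kappa_le1_of_Gamma_Ny (X : Omega -> R) : (0 < n)%N ->
  measurable_fun setT X -> Gamma L w X = -oo%E -> (kappa L w <= 1)%E.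
Proof.
move=> n_gt0 mX GammaNy; apply/lee_addgt0Pr => e e_gt0; rewrite -EFinD.
pose eps i := e * lam_minus (L i) / 2.
have eps_gt0 i : 0 < eps i by rewrite /eps divr_gt0 ?mulr_gt0.
have [K DK] := exists_low_level mX eps_gt0.
pose D := [set om | X om <= - K%:R].
have mD : measurable D by exact: measurable_le_level.
have [_ [x Ax <-]] := lb_ereal_infNy_adherent (n%:R * - K%:R) GammaNy.
rewrite lte_fin => x_lt.
case: Ax => A [y [mA [sum_y [wy Aeq]]]].
have [i yi] := exists_le_mean y n_gt0; rewrite sum_y in yi.
have n_ge1 : 1 <= n%:R :> R by rewrite ler1n.
have K_ge0 : 0 <= K%:R :> R by [].
have yK : y i <= - K%:R.
  apply: le_trans yi _; rewrite ler_pdivrMr; last lra.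
  by rewrite mulrC ltW.
have xK : x <= - K%:R by nra.
have cover om : D om \/ exists j, A j om.
  case: (leP (X om) (- K%:R)) => [|KX]; [by left | right].
  have : [set om | x < X om] om by rewrite /=; lra.
  by rewrite Aeq => -[j _ Aj]; exists j.
have [P [Ppart [PAi PAj]]] := partition_sub_cover_at i mA mD cover.
apply: (kappa_le_of_partition Ppart) => [|j ji].
- have [_ [_ [_ w_mono]]] := w_cap i.
  have wPi : w i (P i) <= w i (A i) + w i D.
    apply: le_trans (w_subadd i (mA i) mD).
    have mAD : measurable (A i `|` D) by exact: measurableU.
    by apply: w_mono mAD PAi; case: Ppart.
  have LyK : L i (y i) <= L i (- K%:R) by exact: (L_HI i).1.
  have [wD LK] := DK i; have := wy i; have := lam_minus_gt0 i; rewrite /eps in wD LK.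
  nra.
- have [_ [_ [_ w_mono]]] := w_cap j.
  have wPj : w j (P j) <= w j (A j).
    by apply: w_mono (mA j) (PAj j ji); case: Ppart.
  have := le_lam_plus (L_HI j) (y j); have := wy j; have := lam_plus_gt0 (L_HI j).
  nra.
Qed.

End kappa_bounds.
End Gamma_kappa.

Theorem mainTheorem13 (d : measure_display) (Omega : measurableType d)
  (R : realType) (n : nat) (L : 'I_n -> R -> R)
  (w : 'I_n -> set Omega -> R) :
  (0 < n)%N ->
  (forall i, in_HI (L i)) ->
  (forall i, 0 < lam_minus (L i) /\ lam_minus (L i) <= lam_plus (L i)
             /\ lam_plus (L i) < 1) ->
  (forall i, capacity (w i) /\ cap_continuous (w i) /\ cap_subadditive (w i)) ->
  ((kappa L w < 1%E)%E ->
     forall X : Omega -> R, measurable_fun setT X -> Gamma L w X = -oo%E) /\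
  ((1%E < kappa L w)%E ->
     forall X : Omega -> R, measurable_fun setT X -> (-oo < Gamma L w X)%E).
Proof.
move=> n_gt0 L_HI lam_bounds w_props.
have lam_minus_gt0 i : 0 < lam_minus (L i) by case: (lam_bounds i).
have w_cap i : capacity (w i) by case: (w_props i).
have w_cont i : cap_continuous (w i) by case: (w_props i) => _ [].
have w_subadd i : cap_subadditive (w i) by case: (w_props i) => _ [].
split=> [kappa_lt1 X mX|kappa_gt1 X mX].
  exact: Gamma_Ny_of_kappa_lt1.
rewrite ltNye; apply/eqP.
move=> /(kappa_le1_of_Gamma_Ny L_HI lam_minus_gt0 w_cap w_cont w_subadd n_gt0 mX).
by rewrite leNgt kappa_gt1.
Qed.
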